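(* For integers $n,m,l,r$ with $1\leq m\leq l<n$ and $0\leq r\leq 2l-2m+2$, the polynomial \[ K_q(n,m)K_q(n,l)-q^{r}K_q(n,m-1)K_q(n,l+1) \] has nonnegative coefficients as a polynomial in $q$.
   Context: For integers $n\ge m\ge 0$ the Gaussian polynomial is ${n\brack m}=\prod_{i=0}^{m-1}\frac{1-q^{n-i}}{1-q^{m-i}}$. For $n\geq 1$ and $0\le m\le n$, the $q$-Kaplansky number is $K_q(n,m)=\frac{1-q^{n+m}}{1-q^{n}}{n\brack m}$ (a polynomial in $q$). *)

From mathcomp Require Import all_boot all_order all_algebra.
Set Implicit Arguments. Unset Strict Implicit. Unset Printing Implicit Defensive.
Import Order.TTheory GRing.Theory Num.Theory.
Local Open Scope ring_scope.

(* Gaussian polynomial [n brack m] = prod_{i<m} (1 - q^(n-i)) / (1 - q^(m-i)),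
   realised in {poly int} as the exact quotient of the two products
   (the denominator has leading coefficient +-1, a unit of int, so %/ is
   exact Euclidean division, and the quotient is exact since the divisibility
   holds). *)
Definition gauss (n m : nat) : {poly int} :=
  (\prod_(i < m) (1 - 'X^(n - i))) %/ (\prod_(i < m) (1 - 'X^(m - i))).

Definition kapq (n m : nat) : {poly int} :=
  ((1 - 'X^(n + m)) * gauss n m) %/ (1 - 'X^n).

From Pilot Require Import Defs.
From mathcomp Require Import all_boot all_order all_algebra.
From mathcomp Require Import ring zify.
Import Order.TTheory GRing.Theory Num.Theory.
Local Open Scope ring_scope.

(* Write [n, k] for the Gaussian binomial and order {poly int} coefficientwise
   (p >= q iff p - q has nonnegative coefficients).
   1. We introduce gbin n k = [n, k-1] (with gbin n 0 = 0) by the q-Pascal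
      recursion, show that it has nonnegative coefficients, and identify it
      with the polynomial quotient gauss via the product formula.
   2. Consequently K_q(n, k) = (1 + q^n) [n-1, k-1] + q^k [n-1, k] (= kap n k),
      and kapq is this polynomial.
   3. Shifted q-log-concavity: for M <= L and r <= 2(L-M),
        gbin a (M+1) gbin a L >= q^r gbin a M gbin a (L+1),
      by induction on a.  In the step, each of the four factors is expanded
      by one of the two forms of q-Pascal's rule (chosen according to r);
      both products then split into four cross terms, and each term on the
      left dominates a matching term on the right by the induction hypothesis.
   4. The theorem follows by the same cross-term comparison, applied to the
      expansion of kap (a+1) k in terms of gbin a. *)

Definition nonneg (p : {poly int}) := forall i, 0 <= p`_i.
Definition pge (p q : {poly int}) := nonneg (p - q).

Lemma nonneg0 : nonneg 0. Proof. by move=> i; rewrite coef0. Qed.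
Lemma nonneg1 : nonneg 1. Proof. by move=> i; rewrite coef1; case: (i == 0%N). Qed.
Lemma nonnegXn k : nonneg 'X^k.
Proof. by move=> i; rewrite coefXn; case: (i == k). Qed.

Lemma nonnegD p q : nonneg p -> nonneg q -> nonneg (p + q).
Proof. by move=> hp hq i; rewrite coefD addr_ge0. Qed.

Lemma nonnegM p q : nonneg p -> nonneg q -> nonneg (p * q).
Proof. by move=> hp hq i; rewrite coefM; apply: sumr_ge0 => j _; apply: mulr_ge0. Qed.

Lemma pge_refl p : pge p p. Proof. by rewrite /pge subrr; apply: nonneg0. Qed.
Lemma pge0 p : nonneg p -> pge p 0. Proof. by rewrite /pge subr0. Qed.

Lemma pge_eq {p q p' q'} : pge p q -> p = p' -> q = q' -> pge p' q'.
Proof. by move=> H <- <-. Qed.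

Lemma pgeD {p q p' q'} : pge p q -> pge p' q' -> pge (p + p') (q + q').
Proof.
move=> h h'; rewrite /pge (_ : _ - _ = (p - q) + (p' - q')); first exact: nonnegD.
by ring.
Qed.

Lemma pge_scaled c P Z s p q : nonneg c -> pge P ('X^s * Z) ->
  p = c * P -> q = c * ('X^s * Z) -> pge p q.
Proof. by move=> hc hP -> ->; rewrite /pge -mulrBr; apply: nonnegM. Qed.

Lemma pge_scaled2 c1 c2 P Z s1 s2 p q : nonneg c1 -> nonneg c2 ->
  pge P ('X^s1 * Z) -> pge P ('X^s2 * Z) ->
  p = (c1 + c2) * P -> q = c1 * ('X^s1 * Z) + c2 * ('X^s2 * Z) -> pge p q.
Proof.
move=> h1 h2 hP1 hP2 -> ->; rewrite mulrDl.
by apply: pgeD;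
  [exact: (pge_scaled _ _ _ _ _ _ h1 hP1) | exact: (pge_scaled _ _ _ _ _ _ h2 hP2)].
Qed.

Lemma pge_cross A B Q a0 b0 a1 b1 c0 d0 c1 d1 y0 y1 y2 z0 z1 z2 :
  A = (a1 * y1 + b1 * y2) * (c0 * z0 + d0 * z1) ->
  B = (a0 * y0 + b0 * y1) * (c1 * z1 + d1 * z2) ->
  pge (b1 * d0 * (y2 * z1)) (Q * (b0 * d1 * (y1 * z2))) ->
  pge (a1 * c0 * (y1 * z0)) (Q * (a0 * c1 * (y0 * z1))) ->
  pge (a1 * d0 * (y1 * z1)) (Q * (a0 * d1 * (y0 * z2))) ->
  pge (b1 * c0 * (y2 * z0)) (Q * (b0 * c1 * (y1 * z1))) ->
  pge A (Q * B).
Proof.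
move=> -> -> H1 H2 H3 H4.
by apply: (pge_eq (pgeD (pgeD H1 H2) (pgeD H3 H4))); ring.
Qed.

(* gbin n k = [n, k-1] for k >= 1 and gbin n 0 = 0, via q-Pascal's rule
   [n+1, k] = [n, k-1] + q^k [n, k]. *)
Fixpoint gbin (n k : nat) {struct n} : {poly int} :=
  match n, k with
  | _, 0%N => 0
  | 0%N, 1%N => 1
  | 0%N, _ => 0
  | n'.+1, k'.+1 => gbin n' k' + 'X^k' * gbin n' k'.+1
  end.

Lemma gbin0 n : gbin n 0 = 0. Proof. by case: n. Qed.
Lemma gbinS n k : gbin n.+1 k.+1 = gbin n k + 'X^k * gbin n k.+1. Proof. by []. Qed.

Lemma gbin1 n : gbin n 1 = 1.
Proof. by elim: n => [//|n IH]; rewrite gbinS gbin0 IH mulr1 add0r. Qed.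

Lemma gbin_gt n k : (n.+1 < k)%N -> gbin n k = 0.
Proof.
elim: n k => [|n IH] [|[|k]] //= Hk.
by rewrite !IH ?mulr0 ?addr0 //; lia.
Qed.

Lemma nonneg_gbin n k : nonneg (gbin n k).
Proof.
elim: n k => [|n IH] [|[|k]] //=; try exact: nonneg0; try exact: nonneg1.
all: by apply: nonnegD; [|apply: nonnegM; [apply: nonnegXn|]]; apply: IH.
Qed.

Ltac nonneg_tac := repeat first
  [ apply: nonnegM | apply: nonnegD | apply: nonnegXn | apply: nonneg1 | apply: nonneg_gbin ].

Lemma gbinS_mirror n k e : (k + e = n.+1)%N ->
  gbin n.+1 k.+1 = 'X^e * gbin n k + gbin n k.+1.
Proof.
elim: n k e => [|n IH] k e He.
  case: k He => [|[|k]] He; last lia.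
  - by rewrite (_ : e = 1%N) /=; [ring | lia].
  - by rewrite (_ : e = 0%N) /=; [ring | lia].
case: k He => [|i] He; first by rewrite !gbin1 gbin0 mulr0 add0r.
rewrite [in RHS]gbinS [in RHS](gbinS n i.+1) gbinS (IH i e); last lia.
case: e He => [|e'] He.
  by rewrite (@gbin_gt n.+1 i.+2) ?(@gbin_gt n i.+2) ?(@gbin_gt n i.+1) //;
    try lia; rewrite !mulr0; ring.
by rewrite (IH i.+1 e'); [rewrite !exprS; ring | lia].
Qed.

(* Comparing the two rules: (1 - q^k) [n, k] = (1 - q^(n+1-k)) [n, k-1]. *)
Lemma gbin_ratio n k e : (k + e = n.+1)%N ->
  (1 - 'X^k) * gbin n k.+1 = (1 - 'X^e) * gbin n k.
Proof.
move=> He; have := @gbinS_mirror _ _ _ He; rewrite gbinS => E.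
apply/eqP; rewrite -subr_eq0; apply/eqP.
transitivity (('X^e * gbin n k + gbin n k.+1) - (gbin n k + 'X^k * gbin n k.+1)).
  by ring.
by rewrite E subrr.
Qed.

Lemma gbin_absorb n k :
  (1 - 'X^(k.+1)) * gbin n.+1 k.+2 = (1 - 'X^(n.+1)) * gbin n k.+1.
Proof.
case: (leqP k n) => Hk; last by rewrite !gbin_gt ?mulr0 //; lia.
have E := @gbin_ratio n k.+1 (n - k) ltac:(lia).
have -> : 'X^(n.+1) = 'X^(k.+1) * 'X^(n - k) :> {poly int}.
  by rewrite -exprD; congr (_ ^+ _); lia.
rewrite gbinS; apply/eqP; rewrite -subr_eq0; apply/eqP.
transitivity ('X^(k.+1) * ((1 - 'X^(k.+1)) * gbin n k.+2 - (1 - 'X^(n - k)) * gbin n k.+1)).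
  by ring.
by rewrite E subrr mulr0.
Qed.

Lemma gbin_prod n m :
  gbin n m.+1 * \prod_(i < m) (1 - 'X^(m - i)) = \prod_(i < m) (1 - 'X^(n - i)).
Proof.
elim: m n => [|m IH] n; first by rewrite !big_ord0 gbin1 mulr1.
rewrite !big_ord_recl !subn0.
under eq_bigr => i _ do rewrite lift0 subSS.
case: n => [|n]; first by rewrite expr0 subrr !mul0r.
under [in RHS]eq_bigr => i _ do rewrite lift0 subSS.
by rewrite -(IH n) mulrA [gbin _ _ * _]mulrC gbin_absorb; ring.
Qed.

(* 1 - q^k has leading coefficient -1, a unit, so dividing by it is exact. *)
Lemma lead_coef_1subXn k : (0 < k)%N -> lead_coef (1 - 'X^k : {poly int}) = -1.
Proof. by move=> hk; rewrite -opprB lead_coefN lead_coefXnsubC. Qed.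

Lemma gaussE n m : gauss n m = gbin n m.+1.
Proof.
rewrite /gauss -gbin_prod Pdiv.IdomainUnit.mulpK // lead_coef_prod.
apply: (big_ind (fun x : int => x \is a GRing.unit)); first exact: unitr1.
  by move=> x y hx hy; rewrite unitrM hx hy.
by move=> i _; rewrite lead_coef_1subXn ?unitrN1 //; have := ltn_ord i; lia.
Qed.

Definition kap (n k : nat) : {poly int} :=
  (1 + 'X^n) * gbin n.-1 k + 'X^k * gbin n.-1 k.+1.

(* The q-Kaplansky number of Defs is kap, since kap n k (1 - q^n) =
   (1 - q^(n+k)) [n, k]. *)
Lemma kapqE n k : (0 < n)%N -> kapq n k = kap n k.
Proof.
case: n => [//|a] _; rewrite /kapq gaussE /kap /=.
suff -> : (1 - 'X^(a.+1 + k)) * (gbin a k + 'X^k * gbin a k.+1)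
        = kap a.+1 k * (1 - 'X^(a.+1)).
  by rewrite Pdiv.IdomainUnit.mulpK // lead_coef_1subXn // unitrN1.
rewrite /kap /=.
case: (leqP k a.+1) => Hk; last by rewrite !gbin_gt //; try lia; ring.
have E := @gbin_ratio a k (a.+1 - k) ltac:(lia).
rewrite exprD.
have -> : 'X^(a.+1) = 'X^k * 'X^(a.+1 - k) :> {poly int}.
  by rewrite -exprD; congr (_ ^+ _); lia.
apply/eqP; rewrite -subr_eq0; apply/eqP.
set Xk := 'X^k; set Xe := 'X^(a.+1 - k).
transitivity (Xk * Xe * Xk * ((1 - Xk) * gbin a k.+1 - (1 - Xe) * gbin a k)).
  by ring.
by rewrite E subrr mulr0.
Qed.

Lemma kap_mirror a k e : (k + e = a.+1)%N ->
  kap a.+1 k = 'X^e * (1 + 'X^k) * gbin a k + gbin a k.+1.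
Proof.
move=> He; have E := @gbin_ratio _ _ _ He.
rewrite /kap /= -He exprD; apply/eqP; rewrite -subr_eq0; apply/eqP.
transitivity (- ((1 - 'X^k) * gbin a k.+1 - (1 - 'X^e) * gbin a k)); first by ring.
by rewrite E subrr oppr0.
Qed.

Lemma kap_square a k : (k <= a.+1)%N ->
  kap a.+1 k = (1 + 'X^k) * gbin a k + 'X^k * 'X^k * gbin a k.+1.
Proof.
move=> Hk; have E := @gbin_ratio a k (a.+1 - k) ltac:(lia).
rewrite /kap /= (_ : 'X^(a.+1) = 'X^k * 'X^(a.+1 - k)); last first.
  by rewrite -exprD; congr (_ ^+ _); lia.
apply/eqP; rewrite -subr_eq0; apply/eqP.
transitivity ('X^k * ((1 - 'X^k) * gbin a k.+1 - (1 - 'X^(a.+1 - k)) * gbin a k)).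
  by ring.
by rewrite E subrr mulr0.
Qed.

Definition gbin_lc_at (a : nat) := forall M L r, (M <= L)%N -> (r <= 2 * (L - M))%N ->
  pge (gbin a M.+1 * gbin a L) ('X^r * (gbin a M * gbin a L.+1)).

Ltac ring_exp := rewrite ?exprS ?expr0; ring.

Ltac lc_side := first [ lia | ring_exp | nonneg_tac ].

Section CrossTermStep.
Variables (a j l : nat).
Hypothesis lc : gbin_lc_at a.
Hypothesis lt_jl : (j < l)%N.
Hypothesis le_la : (l <= a)%N.

Lemma lc_term c M L s p q : (M <= L)%N -> (s <= 2 * (L - M))%N -> nonneg c ->
  p = c * (gbin a M.+1 * gbin a L) -> q = c * ('X^s * (gbin a M * gbin a L.+1)) ->
  pge p q.
Proof. by move=> ML sML hc; apply: pge_scaled => //; apply: lc. Qed.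

Lemma lc_term2 c1 c2 M L s1 s2 p q : (M <= L)%N ->
  (s1 <= 2 * (L - M))%N -> (s2 <= 2 * (L - M))%N -> nonneg c1 -> nonneg c2 ->
  p = (c1 + c2) * (gbin a M.+1 * gbin a L) ->
  q = c1 * ('X^s1 * (gbin a M * gbin a L.+1)) + c2 * ('X^s2 * (gbin a M * gbin a L.+1)) ->
  pge p q.
Proof. by move=> ML s1ML s2ML h1 h2; apply: pge_scaled2 => //; apply: lc. Qed.

(* r = 0: expand the left factors gbin a.+1 j.+2, gbin a.+1 j.+1 by the
   mirrored rule and the right ones by q-Pascal's rule. *)
Lemma gbin_step_r0 :
  pge (gbin a.+1 j.+2 * gbin a.+1 l.+1) ('X^0 * (gbin a.+1 j.+1 * gbin a.+1 l.+2)).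
Proof.
have Ey1 := @gbinS_mirror a j.+1 (a - j) ltac:(lia).
have Ey0 := @gbinS_mirror a j (a - j).+1 ltac:(lia).
apply: (@pge_cross _ _ _ ('X^((a - j).+1)) 1 ('X^(a - j)) 1 1 ('X^l) 1 ('X^(l.+1))
   (gbin a j) (gbin a j.+1) (gbin a j.+2) (gbin a l) (gbin a l.+1) (gbin a l.+2)).
- by rewrite Ey1 gbinS; ring.
- by rewrite Ey0 gbinS; ring.
- by apply: (@lc_term ('X^l) j.+1 l.+1 1); lc_side.
- by apply: (@lc_term ('X^(a - j)) j l 1); lc_side.
- by apply: (@lc_term ('X^(a - j) * 'X^l) j l.+1 2); lc_side.
- by apply: (@lc_term 1 j.+1 l 0); lc_side.
Qed.

(* r = 1: expand all four factors by q-Pascal's rule. *)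
Lemma gbin_step_r1 :
  pge (gbin a.+1 j.+2 * gbin a.+1 l.+1) ('X^1 * (gbin a.+1 j.+1 * gbin a.+1 l.+2)).
Proof.
apply: (@pge_cross _ _ _ 1 ('X^j) 1 ('X^(j.+1)) 1 ('X^l) 1 ('X^(l.+1))
   (gbin a j) (gbin a j.+1) (gbin a j.+2) (gbin a l) (gbin a l.+1) (gbin a l.+2)).
- by rewrite !gbinS; ring.
- by rewrite !gbinS; ring.
- by apply: (@lc_term ('X^(j.+1) * 'X^l) j.+1 l.+1 1); lc_side.
- by apply: (@lc_term 1 j l 1); lc_side.
- by apply: (@lc_term ('X^l) j l.+1 2); lc_side.
- by apply: (@lc_term ('X^(j.+1)) j.+1 l 0); lc_side.
Qed.

(* r >= 2: expand the right factors gbin a.+1 l.+1, gbin a.+1 l.+2 by the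
   mirrored rule and the left ones by q-Pascal's rule. *)
Lemma gbin_step_r2 s : (s.+2 <= 2 * (l - j))%N ->
  pge (gbin a.+1 j.+2 * gbin a.+1 l.+1) ('X^(s.+2) * (gbin a.+1 j.+1 * gbin a.+1 l.+2)).
Proof.
move=> Hs.
have Ez0 := @gbinS_mirror a l (a - l).+1 ltac:(lia).
have Ez1 := @gbinS_mirror a l.+1 (a - l) ltac:(lia).
apply: (@pge_cross _ _ _ 1 ('X^j) 1 ('X^(j.+1)) ('X^((a - l).+1)) 1 ('X^(a - l)) 1
   (gbin a j) (gbin a j.+1) (gbin a j.+2) (gbin a l) (gbin a l.+1) (gbin a l.+2)).
- by rewrite gbinS Ez0; ring.
- by rewrite gbinS Ez1; ring.
- by apply: (@lc_term ('X^(j.+1)) j.+1 l.+1 s.+1); lc_side.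
- by apply: (@lc_term ('X^((a - l).+1)) j l s.+1); lc_side.
- by apply: (@lc_term 1 j l.+1 s.+2); lc_side.
- by apply: (@lc_term ('X^(j.+1) * 'X^((a - l).+1)) j.+1 l s); lc_side.
Qed.

(* The same three cases for kap (a+1), expanded by kap_mirror, by the
   definition of kap, and by kap_square respectively. *)
Lemma kap_step_r0 :
  pge (kap a.+1 j.+1 * kap a.+1 l) ('X^0 * (kap a.+1 j * kap a.+1 l.+1)).
Proof.
have Ey1 := @kap_mirror a j.+1 (a - j) ltac:(lia).
have Ey0 := @kap_mirror a j (a - j).+1 ltac:(lia).
apply: (@pge_cross _ _ _ ('X^((a - j).+1) * (1 + 'X^j)) 1 ('X^(a - j) * (1 + 'X^(j.+1))) 1
   (1 + 'X^(a.+1)) ('X^l) (1 + 'X^(a.+1)) ('X^(l.+1))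
   (gbin a j) (gbin a j.+1) (gbin a j.+2) (gbin a l) (gbin a l.+1) (gbin a l.+2)).
- by rewrite Ey1 /kap; ring.
- by rewrite Ey0 /kap; ring.
- by apply: (@lc_term ('X^l) j.+1 l.+1 1); lc_side.
- by apply: (@lc_term2 ('X^(a - j) * (1 + 'X^(a.+1)))
    ('X^(a - j) * 'X^(j.+1) * (1 + 'X^(a.+1))) j l 1 0); lc_side.
- by apply: (@lc_term2 ('X^(a - j) * 'X^l) ('X^(a - j) * 'X^(j.+1) * 'X^l) j l.+1 2 1);
    lc_side.
- by apply: (@lc_term (1 + 'X^(a.+1)) j.+1 l 0); lc_side.
Qed.

Lemma kap_step_r1 :
  pge (kap a.+1 j.+1 * kap a.+1 l) ('X^1 * (kap a.+1 j * kap a.+1 l.+1)).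
Proof.
apply: (@pge_cross _ _ _ (1 + 'X^(a.+1)) ('X^j) (1 + 'X^(a.+1)) ('X^(j.+1))
   (1 + 'X^(a.+1)) ('X^l) (1 + 'X^(a.+1)) ('X^(l.+1))
   (gbin a j) (gbin a j.+1) (gbin a j.+2) (gbin a l) (gbin a l.+1) (gbin a l.+2)).
- by rewrite /kap; ring.
- by rewrite /kap; ring.
- by apply: (@lc_term ('X^(j.+1) * 'X^l) j.+1 l.+1 1); lc_side.
- by apply: (@lc_term ((1 + 'X^(a.+1)) * (1 + 'X^(a.+1))) j l 1); lc_side.
- by apply: (@lc_term ((1 + 'X^(a.+1)) * 'X^l) j l.+1 2); lc_side.
- by apply: (@lc_term ('X^(j.+1) * (1 + 'X^(a.+1))) j.+1 l 0); lc_side.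
Qed.

Lemma kap_step_r2 s : (s.+2 <= 2 * (l - j))%N ->
  pge (kap a.+1 j.+1 * kap a.+1 l) ('X^(s.+2) * (kap a.+1 j * kap a.+1 l.+1)).
Proof.
move=> Hs.
have Ey1 := @kap_square a j.+1 ltac:(lia).
have Ey0 := @kap_square a j ltac:(lia).
apply: (@pge_cross _ _ _ (1 + 'X^j) ('X^j * 'X^j) (1 + 'X^(j.+1)) ('X^(j.+1) * 'X^(j.+1))
   (1 + 'X^(a.+1)) ('X^l) (1 + 'X^(a.+1)) ('X^(l.+1))
   (gbin a j) (gbin a j.+1) (gbin a j.+2) (gbin a l) (gbin a l.+1) (gbin a l.+2)).
- by rewrite Ey1 /kap; ring.
- by rewrite Ey0 /kap; ring.
- by apply: (@lc_term ('X^(j.+1) * 'X^(j.+1) * 'X^l) j.+1 l.+1 s.+1); lc_side.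
- by apply: (@lc_term2 (1 + 'X^(a.+1)) ('X^(j.+1) * (1 + 'X^(a.+1))) j l s.+2 s.+1);
    lc_side.
- by apply: (@lc_term2 ('X^l) ('X^(j.+1) * 'X^l) j l.+1 s.+3 s.+2); lc_side.
- by apply: (@lc_term ('X^(j.+1) * 'X^(j.+1) * (1 + 'X^(a.+1))) j.+1 l s); lc_side.
Qed.

End CrossTermStep.

(* On the diagonal M = L only r = 0 is allowed, and both sides coincide. *)
Lemma gbin_lc_diag a M L r : (L <= M)%N -> (M <= L)%N -> (r <= 2 * (L - M))%N ->
  pge (gbin a M.+1 * gbin a L) ('X^r * (gbin a M * gbin a L.+1)).
Proof.
move=> LM ML Hr; have eqLM : L = M by lia.
have r0 : r = 0%N by lia.
by rewrite eqLM r0; apply: (pge_eq (pge_refl (gbin a M.+1 * gbin a M))); ring.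
Qed.

Lemma gbin_lc a : gbin_lc_at a.
Proof.
elim: a => [|a IH] M L r HML Hr; case: (ltnP M L) => [ltML | leLM].
- by rewrite (@gbin_gt 0 L.+1) ?mulr0; [apply: pge0; nonneg_tac | lia].
- exact: gbin_lc_diag.
- case: M HML Hr ltML => [|j] HML Hr ltML.
    by rewrite gbin0 mul0r mulr0; apply: pge0; nonneg_tac.
  case: (ltnP a.+1 L) => HL.
    by rewrite (@gbin_gt a.+1 L.+1) ?mulr0; [apply: pge0; nonneg_tac | lia].
  case: L HML Hr HL ltML => [//|l] HML Hr HL ltML.
  case: r Hr => [|[|s]] Hr.
  + by apply: gbin_step_r0 => //; lia.
  + by apply: gbin_step_r1 => //; lia.
  + by apply: gbin_step_r2 => //; lia.
- exact: gbin_lc_diag.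
Qed.

Theorem theorem1p2 (n m l r : nat) :
  (1 <= m)%N -> (m <= l)%N -> (l < n)%N -> (r <= 2 * l - 2 * m + 2)%N ->
  forall i : nat,
    0 <= (kapq n m * kapq n l - 'X^r * kapq n (m - 1) * kapq n (l + 1))`_i.
Proof.
move=> Hm Hml Hln Hr i.
case: n Hln => [|a] Hln; first by lia.
case: m Hm Hml Hr => [//|j] _ Hml Hr.
rewrite !kapqE // subn1 /= addn1 -mulrA.
have lc := gbin_lc a.
case: r Hr => [|[|s]] Hr.
- by apply: kap_step_r0 => //; lia.
- by apply: kap_step_r1 => //; lia.
- by apply: kap_step_r2 => //; lia.
Qed.
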